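(* Let $n$ be a positive integer. Then $$ \sum_{k=0}^{n-1}[4k-1]_{q^2}[4k-1]^2\frac{(q^{-2};q^4)_k^4}{(q^4;q^4)_k^4}q^{4k} =(q^{2n}+1)^4[n]_{q^2}^4\frac{(q^{-2};q^4)^4_{n}}{(q^4;q^4)_{n}^4} \left(2\cdot\frac{q^5+q^{4n+1}(q^{4n-2}-q^2-1)}{(q^2-1)^2}-q^{4n}\right). $$
   Context: $q$ is an indeterminate. For an integer $m$, $[m]=[m]_q=(1-q^m)/(1-q)$ and $[m]_{q^2}=(1-q^{2m})/(1-q^2)$. The $q$-shifted factorial is $(a;q)_0=1$ and $(a;q)_k=(1-a)(1-aq)\cdots(1-aq^{k-1})$ for $k\ge1$. The identity is an identity of rational functions in $q$. *)

From HB Require Import structures.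
From mathcomp Require Import all_boot all_order all_algebra fraction.
Set Implicit Arguments. Unset Strict Implicit. Unset Printing Implicit Defensive.
Import Order.TTheory GRing.Theory Num.Theory.
Local Open Scope ring_scope.

Definition RatFun := {fraction {poly rat}}.
Definition qvar : RatFun := @FracField.tofrac _ ('X : {poly rat}).

Definition qint (F : fieldType) (x : F) (m : int) : F := (1 - x ^ m) / (1 - x).

Definition qpoch (F : fieldType) (a x : F) (k : nat) : F :=
  \prod_(i < k) (1 - a * x ^+ i).

From HB Require Import structures.
From mathcomp Require Import all_boot all_order all_algebra fraction.
From mathcomp Require Import ring zify.
Import Order.TTheory GRing.Theory Num.Theory.
Local Open Scope ring_scope.

(* The identity is a telescoping sum.  Writing T k for the k-th summand and
   R n for the right-hand side, we show R 0 = 0 and R k + T k = R k.+1, so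
   that the partial sums of T are exactly R n.  The argument is carried out in an arbitrary field F
   for an element q that is nonzero and not a root of unity: these are the
   only facts needed to clear the denominators [m]_q, (q^4;q^4)_k and q^2 - 1.
   The recurrence step is a rational-function identity; for k >= 1 all the
   powers of q are rewritten as monomials in q times powers of z = q^(2(k-1)),
   after which [field] verifies it with z as a fresh variable.  The case
   k = 0 (where the exponent 4k - 1 = -1 is negative) is checked separately.
   Finally the indeterminate q of Q(q) satisfies both hypotheses. *)

Lemma qvar_neq0 : qvar != 0.
Proof.
rewrite /qvar tofrac_eq0; apply/eqP => hX0.
by have := congr1 (fun p : {poly rat} => p`_1) hX0; rewrite coefX coef0.
Qed.

(* The indeterminate q is not a root of unity: 1 - q^k != 0 for k > 0,
   since the polynomial 1 - X^k takes the value 1 at 0. *)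
Lemma one_sub_qvarX_neq0 k : (0 < k)%N -> 1 - qvar ^+ k != 0.
Proof.
move=> k_gt0.
have -> : 1 - qvar ^+ k = FracField.tofrac (1 - 'X^k : {poly rat}).
  by rewrite /qvar rmorphB rmorph1 rmorphXn.
rewrite tofrac_eq0; apply/eqP => /(congr1 (horner^~ 0)).
by rewrite !hornerE expr0n eqn0Ngt k_gt0 subr0 => /eqP; rewrite oner_eq0.
Qed.

Lemma qpochS (F : fieldType) (a x : F) k :
  qpoch a x k.+1 = qpoch a x k * (1 - a * x ^+ k).
Proof. by rewrite /qpoch big_ord_recr. Qed.

Lemma qint_nat (F : fieldType) (x : F) (m : nat) :
  qint x m%:Z = (1 - x ^+ m) / (1 - x).
Proof. by []. Qed.

Section Telescoping.
Variables (F : fieldType) (q : F).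
Hypothesis q_neq0 : q != 0.
Hypothesis q_not_root1 : forall k, (0 < k)%N -> 1 - q ^+ k != 0.

Definition summand (k : nat) : F :=
  qint (q ^+ 2) (4 * k%:Z - 1) * (qint q (4 * k%:Z - 1)) ^+ 2
  * (qpoch (q ^- 2) (q ^+ 4) k) ^+ 4 / (qpoch (q ^+ 4) (q ^+ 4) k) ^+ 4
  * q ^+ (4 * k).

Definition closed_form (n : nat) : F :=
  (q ^+ (2 * n) + 1) ^+ 4 * (qint (q ^+ 2) n%:Z) ^+ 4
  * (qpoch (q ^- 2) (q ^+ 4) n) ^+ 4 / (qpoch (q ^+ 4) (q ^+ 4) n) ^+ 4
  * (2 * ((q ^+ 5 + q ^+ (4 * n + 1) * (q ^+ (4 * n - 2) - q ^+ 2 - 1))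
          / (q ^+ 2 - 1) ^+ 2)
     - q ^+ (4 * n)).

(* Rewriting a power of q as q^c * (q^(2m))^j; used to express every power
   occurring in the recurrence step through the single variable q^(2m). *)
Lemma expr_split m c j e : e = (c + 2 * m * j)%N ->
  q ^+ e = q ^+ c * (q ^+ (2 * m)) ^+ j.
Proof. by move=> ->; rewrite exprD exprM. Qed.

Lemma qpoch_q4_neq0 k : qpoch (q ^+ 4) (q ^+ 4) k != 0.
Proof.
elim: k => [|k IHk]; first by rewrite /qpoch big_ord0 oner_eq0.
rewrite qpochS mulf_neq0 // -exprM -exprD; exact: q_not_root1.
Qed.

Let one_sub_q_neq0 : 1 - q != 0.
Proof. by have := q_not_root1 1 isT; rewrite expr1. Qed.

Let q2_sub1_neq0 : q ^+ 2 - 1 != 0.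
Proof. by rewrite -opprB oppr_eq0; exact: q_not_root1. Qed.

(* The closed form vanishes at n = 0 because [0]_{q^2} = 0. *)
Lemma closed_form0 : closed_form 0 = 0.
Proof.
by rewrite /closed_form qint_nat expr0 subrr mul0r expr0n /= mulr0 !mul0r.
Qed.

Lemma closed_form_step0 : closed_form 0 + summand 0 = closed_form 1.
Proof.
have one_sub_q2_neq0 : 1 - q ^+ 2 != 0 by exact: q_not_root1.
rewrite closed_form0 add0r /closed_form /summand qint_nat /qint /qpoch.
rewrite !big_ord0 !big_ord1 (_ : 4 * 0%:Z - 1 = - 1) // !exprN1.
rewrite !expr0 !mulr1 !expr1n.
field.
by rewrite q2_sub1_neq0 (q_not_root1 4 isT) q_neq0 one_sub_q2_neq0
  one_sub_q_neq0 oner_eq0.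
Qed.

(* General step of the recurrence, for k = m + 1 >= 1: after peeling the last
   factor off each q-shifted factorial it is an identity between rational
   functions of q and z = q^(2m). *)
Lemma closed_form_stepS m :
  closed_form m.+1 + summand m.+1 = closed_form m.+2.
Proof.
have one_sub_q2_neq0 : 1 - q ^+ 2 != 0 by exact: q_not_root1.
have den_neq0 := qpoch_q4_neq0 m.+1.
have new_factor_neq0 : 1 - q ^+ (8 + 2 * m * 2) != 0 by exact: q_not_root1.
rewrite /closed_form /summand !(@qpochS _ _ _ m.+1).
set a := qpoch _ _ m.+1; set b := qpoch _ _ m.+1.
rewrite (_ : 4 * m.+1%:Z - 1 = (4 * m + 3)%N); last by lia.
rewrite !qint_nat -!exprM.
rewrite (expr_split m 2 1 (2 * m.+1)); last by lia.
rewrite (expr_split m 5 2 (4 * m.+1 + 1)); last by lia.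
rewrite (expr_split m 2 2 (4 * m.+1 - 2)); last by lia.
rewrite (expr_split m 4 2 (4 * m.+1)); last by lia.
rewrite (expr_split m 6 4 (2 * (4 * m + 3))); last by lia.
rewrite (expr_split m 3 2 (4 * m + 3)); last by lia.
rewrite (expr_split m 4 1 (2 * m.+2)); last by lia.
rewrite (expr_split m 9 2 (4 * m.+2 + 1)); last by lia.
rewrite (expr_split m 6 2 (4 * m.+2 - 2)); last by lia.
rewrite (expr_split m 8 2 (4 * m.+2)); last by lia.
rewrite (expr_split m 8 2 (8 + 2 * m * 2)) // in new_factor_neq0.
set z := q ^+ (2 * m).
field.
by rewrite q2_sub1_neq0 mulrA -exprD new_factor_neq0 den_neq0 q_neq0
  one_sub_q2_neq0 one_sub_q_neq0.
Qed.

Lemma closed_formS k : closed_form k + summand k = closed_form k.+1.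
Proof. by case: k => [|m]; [exact: closed_form_step0 | exact: closed_form_stepS]. Qed.

Lemma sum_summand n : \sum_(k < n) summand k = closed_form n.
Proof.
elim: n => [|n IHn]; first by rewrite big_ord0 closed_form0.
by rewrite big_ord_recr IHn /= closed_formS.
Qed.

End Telescoping.

Theorem theorem2 (n : nat) (hn : (0 < n)%N) :
  let q := qvar in
  \sum_(k < n)
     qint (q ^+ 2) (4 * k%:Z - 1) * (qint q (4 * k%:Z - 1)) ^+ 2
     * (qpoch (q ^- 2) (q ^+ 4) k) ^+ 4 / (qpoch (q ^+ 4) (q ^+ 4) k) ^+ 4
     * q ^+ (4 * k)
  = (q ^+ (2 * n) + 1) ^+ 4 * (qint (q ^+ 2) n%:Z) ^+ 4
     * (qpoch (q ^- 2) (q ^+ 4) n) ^+ 4 / (qpoch (q ^+ 4) (q ^+ 4) n) ^+ 4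
     * (2 * ((q ^+ 5 + q ^+ (4 * n + 1) * (q ^+ (4 * n - 2) - q ^+ 2 - 1))
             / (q ^+ 2 - 1) ^+ 2)
        - q ^+ (4 * n)).
Proof. exact: (@sum_summand _ _ qvar_neq0 one_sub_qvarX_neq0 n). Qed.
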